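(* The total number of Euclidean self-dual linear codes of length $n$ over $R$ is $$\Big(\sum_{k=0}^{\lfloor n/2\rfloor}\nu_{n,k}\,2^{k(k+1)/2}\Big)^2,$$ where $\nu_{n,k}$ is the number of binary $[n,k]$ linear codes that are Euclidean self-orthogonal and doubly-even (every codeword has Hamming weight divisible by $4$).
   Context: $R=\mathbb{Z}_4[v]/(v^2-v)$. A linear code of length $n$ over $R$ is an $R$-submodule $\mathcal{C}$ of $R^n$; it is Euclidean self-dual if $\mathcal{C}=\mathcal{C}^\perp$ where $\mathcal{C}^\perp=\{\mathbf{x}\in R^n:\sum_i x_ic_i=0\ \forall\mathbf{c}\in\mathcal{C}\}$. *)

From HB Require Import structures.
From mathcomp Require Import all_boot all_order all_algebra.
Set Implicit Arguments. Unset Strict Implicit. Unset Printing Implicit Defensive.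
Import GRing.Theory.

(* The ring R = Z_4[v]/(v^2 - v): an element a + b v (a, b in Z_4) is
   represented by the pair (a, b).  Multiplication uses v^2 = v:
   (a + b v)(c + d v) = ac + (ad + bc + bd) v. *)
Definition Rt : finType := ('Z_4 * 'Z_4)%type.
Definition Rzero : Rt := (0%R, 0%R).
Definition Radd (x y : Rt) : Rt := ((x.1 + y.1)%R, (x.2 + y.2)%R).
Definition Rmul (x y : Rt) : Rt :=
  ((x.1 * y.1)%R, (x.1 * y.2 + x.2 * y.1 + x.2 * y.2)%R).

Definition Rvec (n : nat) : finType := {ffun 'I_n -> Rt}.
Definition vzero n : Rvec n := [ffun => Rzero].
Definition vadd n (x y : Rvec n) : Rvec n := [ffun i => Radd (x i) (y i)].
Definition vscale n (r : Rt) (x : Rvec n) : Rvec n := [ffun i => Rmul r (x i)].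
Definition dotR n (x y : Rvec n) : Rt := \big[Radd/Rzero]_(i < n) Rmul (x i) (y i).

Definition R_linear_code n (C : {set Rvec n}) : bool :=
  [&& vzero n \in C,
      [forall x in C, forall y in C, vadd x y \in C] &
      [forall r : Rt, forall x in C, vscale r x \in C]].

Definition R_dual n (C : {set Rvec n}) : {set Rvec n} :=
  [set x | [forall c in C, dotR x c == Rzero]].

Definition R_self_dual n (C : {set Rvec n}) : bool := C == R_dual C.

Definition bin_linear_code n (C : {set 'rV['F_2]_n}) : bool :=
  [&& (0 : 'rV['F_2]_n)%R \in C,
      [forall x in C, forall y in C, (x + y)%R \in C] &
      [forall a : 'F_2, forall x in C, (a *: x)%R \in C]].

Definition bin_dot n (x y : 'rV['F_2]_n) : 'F_2 := (\sum_(i < n) x ord0 i * y ord0 i)%R.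

Definition bin_self_orthogonal n (C : {set 'rV['F_2]_n}) : bool :=
  [forall x in C, forall y in C, bin_dot x y == 0%R].

Definition hweight n (x : 'rV['F_2]_n) : nat := #|[set i | x ord0 i != 0%R]|.

Definition doubly_even n (C : {set 'rV['F_2]_n}) : bool :=
  [forall x in C, 4 %| hweight x].

Definition nu (n k : nat) : nat :=
  #|[set C : {set 'rV['F_2]_n} | [&& bin_linear_code C, #|C| == 2 ^ k,
                                     bin_self_orthogonal C & doubly_even C]]|.

(* R = Z_4[v]/(v^2 - v) is Z_4 x Z_4 through the evaluations at v = 0 and v = 1,
   compatibly with the Euclidean form, so self-dual R-codes are exactly products of
   two self-dual Z_4-codes.  The residue (reduction mod 2) C of a self-dual Z_4-code
   D is doubly-even, and D is determined by C together with lifts [g_j + 2 b_j] of a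
   basis g_1..g_k of C, taken modulo twice the dual of C.  Recording [g_i . b_j]
   gives a bijection onto the binary k x k matrices f whose [f + f^T] is prescribed
   off the diagonal, and there are 2^(k(k+1)/2) of them. *)

From mathcomp Require Import all_boot all_order all_algebra.
Set Implicit Arguments. Unset Strict Implicit. Unset Printing Implicit Defensive.
Import GRing.Theory.

Local Open Scope ring_scope.

Ltac case_Z4 := case=> [[|[|[|[|?]]]] ?] //.
Ltac case_F2 := case=> [[|[|?]] ?] //.

(* [res2 z] and [hibit z] are the binary digits of z: z = lift01 (res2 z) + twice (hibit z). *)
Definition res2 (z : 'Z_4) : 'F_2 := (odd z)%:R.
Definition lift01 (a : 'F_2) : 'Z_4 := (a : nat)%:R.
Definition twice (a : 'F_2) : 'Z_4 := (2 * a)%:R.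
Definition hibit (z : 'Z_4) : 'F_2 := (odd (z %/ 2))%:R.

Lemma res2D x y : res2 (x + y) = res2 x + res2 y.
Proof. by apply/eqP; move: x y; case_Z4; case_Z4. Qed.
Lemma res2M x y : res2 (x * y) = res2 x * res2 y.
Proof. by apply/eqP; move: x y; case_Z4; case_Z4. Qed.
Lemma res2N x : res2 (- x) = res2 x.
Proof. by apply/eqP; move: x; case_Z4. Qed.
Lemma res2_lift01 a : res2 (lift01 a) = a.
Proof. by apply/eqP; move: a; case_F2. Qed.
Lemma res2_twice a : res2 (twice a) = 0.
Proof. by apply/eqP; move: a; case_F2. Qed.
Lemma hibit_twice a : hibit (twice a) = a.
Proof. by apply/eqP; move: a; case_F2. Qed.
Lemma twiceD a b : twice (a + b) = twice a + twice b.
Proof. by apply/eqP; move: a b; case_F2; case_F2. Qed.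
Lemma twiceMl a z : twice a * z = twice (a * res2 z).
Proof. by apply/eqP; move: a z; case_F2; case_Z4. Qed.
Lemma lift01_twice a b : lift01 a * twice b = twice (a * b).
Proof. by apply/eqP; move: a b; case_F2; case_F2. Qed.
Lemma twice_inj : injective twice.
Proof. by move=> a b; apply: contra_eq; move: a b; case_F2; case_F2. Qed.
Lemma twice_eq0 a : (twice a == 0) = (a == 0).
Proof. by move: a; case_F2. Qed.
Lemma res2_eq0 z : res2 z = 0 -> z = twice (hibit z).
Proof. by apply: contra_eq; move: z; case_Z4. Qed.
Lemma addZ4_eq0 z : z + z = 0 -> res2 z = 0.
Proof. by apply: contra_eq; move: z; case_Z4. Qed.

Lemma sqrZ4 z : z * z = (res2 z != 0)%:R.
Proof. by apply/eqP; move: z; case_Z4. Qed.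
Lemma natZ4_eq0 m : ((m%:R : 'Z_4) == 0) = (4 %| m)%N.
Proof. by rewrite -val_eqE /= val_Zp_nat. Qed.

Lemma addF2 (a : 'F_2) : a + a = 0.
Proof. exact/addrr_pchar2/pchar_Fp. Qed.

Lemma res2_sum I (r : seq I) P (F : I -> 'Z_4) :
  res2 (\sum_(i <- r | P i) F i) = \sum_(i <- r | P i) res2 (F i).
Proof. exact: (big_morph res2 res2D (erefl : res2 0 = 0)). Qed.
Lemma twice_sum I (r : seq I) P (F : I -> 'F_2) :
  twice (\sum_(i <- r | P i) F i) = \sum_(i <- r | P i) twice (F i).
Proof. exact: (big_morph twice twiceD (erefl : twice 0 = 0)). Qed.

Section Vectors.
Variable n : nat.
Notation V4 := 'rV['Z_4]_n.
Notation V2 := 'rV['F_2]_n.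

Definition resv (x : V4) : V2 := map_mx res2 x.
Definition liftv (u : V2) : V4 := map_mx lift01 u.
Definition twicev (u : V2) : V4 := map_mx twice u.
Definition hibitv (x : V4) : V2 := map_mx hibit x.
Definition dotZ4 (x y : V4) : 'Z_4 := \sum_(i < n) x 0 i * y 0 i.

Lemma addv_F2 (u : V2) : u + u = 0.
Proof. by apply/matrixP=> i j; rewrite !mxE addF2. Qed.

Lemma resvD x y : resv (x + y) = resv x + resv y.
Proof. by apply/matrixP=> i j; rewrite !mxE res2D. Qed.
Lemma resvB x y : resv (x - y) = resv x + resv y.
Proof. by apply/matrixP=> i j; rewrite !mxE res2D res2N. Qed.
Lemma resv0 : resv 0 = 0.
Proof. by apply/matrixP=> i j; rewrite !mxE. Qed.
Lemma resvZ a x : resv (lift01 a *: x) = a *: resv x.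
Proof. by apply/matrixP=> i j; rewrite !mxE res2M res2_lift01. Qed.
Lemma resv_sum I (r : seq I) P (F : I -> V4) :
  resv (\sum_(i <- r | P i) F i) = \sum_(i <- r | P i) resv (F i).
Proof. exact: (big_morph resv resvD resv0). Qed.
Lemma resv_liftv u : resv (liftv u) = u.
Proof. by apply/matrixP=> i j; rewrite !mxE res2_lift01. Qed.
Lemma resv_twicev u : resv (twicev u) = 0.
Proof. by apply/matrixP=> i j; rewrite !mxE res2_twice. Qed.
Lemma hibitv_twicev u : hibitv (twicev u) = u.
Proof. by apply/matrixP=> i j; rewrite !mxE hibit_twice. Qed.
Lemma twicevD u v : twicev (u + v) = twicev u + twicev v.
Proof. by apply/matrixP=> i j; rewrite !mxE twiceD. Qed.
Lemma resv_eq0 x : resv x = 0 -> x = twicev (hibitv x).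
Proof.
move/matrixP=> x0; apply/matrixP=> i j; rewrite !mxE; apply: res2_eq0.
by have := x0 i j; rewrite !mxE.
Qed.
Lemma resv_eq_twicev x y : resv x = resv y -> x - y = twicev (hibitv (x - y)).
Proof. by move=> xy; apply: resv_eq0; rewrite resvB xy addv_F2. Qed.

Lemma dotZ4C x y : dotZ4 x y = dotZ4 y x.
Proof. by apply: eq_bigr=> i _; rewrite mulrC. Qed.
Lemma dotZ4Dl x y z : dotZ4 (x + y) z = dotZ4 x z + dotZ4 y z.
Proof. by rewrite /dotZ4 -big_split; apply: eq_bigr=> i _; rewrite mxE mulrDl. Qed.
Lemma dotZ4Dr x y z : dotZ4 z (x + y) = dotZ4 z x + dotZ4 z y.
Proof. by rewrite dotZ4C dotZ4Dl !(dotZ4C z). Qed.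
Lemma dotZ4Nl x z : dotZ4 (- x) z = - dotZ4 x z.
Proof. by rewrite /dotZ4 -sumrN; apply: eq_bigr=> i _; rewrite mxE mulNr. Qed.
Lemma dotZ4Zl a x z : dotZ4 (a *: x) z = a * dotZ4 x z.
Proof. by rewrite /dotZ4 mulr_sumr; apply: eq_bigr=> i _; rewrite mxE mulrA. Qed.
Lemma dotZ40l z : dotZ4 0 z = 0.
Proof. by rewrite /dotZ4 big1 // => i _; rewrite mxE mul0r. Qed.
Lemma dotZ4_suml I (r : seq I) P (F : I -> V4) z :
  dotZ4 (\sum_(i <- r | P i) F i) z = \sum_(i <- r | P i) dotZ4 (F i) z.
Proof.
elim/big_rec2: _ => [|i y1 y2 _ <-]; first exact: dotZ40l.
by rewrite dotZ4Dl.
Qed.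

Lemma dotZ4_twicev u x : dotZ4 (twicev u) x = twice (bin_dot u (resv x)).
Proof. by rewrite twice_sum; apply: eq_bigr=> i _; rewrite !mxE twiceMl. Qed.
Lemma dotZ4_liftv_twicev u v : dotZ4 (liftv u) (twicev v) = twice (bin_dot u v).
Proof. by rewrite twice_sum; apply: eq_bigr=> i _; rewrite !mxE lift01_twice. Qed.
Lemma res2_dotZ4 x y : res2 (dotZ4 x y) = bin_dot (resv x) (resv y).
Proof. by rewrite res2_sum; apply: eq_bigr=> i _; rewrite !mxE res2M. Qed.

Lemma dotZ4_self x : dotZ4 x x = (hweight (resv x))%:R.
Proof.
rewrite /dotZ4 /hweight; under eq_bigr => i _ do rewrite sqrZ4.
rewrite -natr_sum -sum1_card; congr (_%:R); rewrite [RHS]big_mkcond /=.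
by apply: eq_bigr=> i _; rewrite inE !mxE; case: (_ != 0).
Qed.

(* The [twicev b . twicev b'] term vanishes since 2 * 2 = 0 in Z_4. *)
Lemma dotZ4_lift_twice u v b b' :
  dotZ4 (liftv u + twicev b) (liftv v + twicev b') =
  dotZ4 (liftv u) (liftv v) + twice (bin_dot u b' + bin_dot b v).
Proof.
rewrite dotZ4Dl !dotZ4Dr dotZ4_liftv_twicev !dotZ4_twicev resv_liftv resv_twicev.
have -> : bin_dot b 0 = 0 by rewrite /bin_dot big1 // => k _; rewrite mxE mulr0.
by rewrite addr0 twiceD addrA.
Qed.

Lemma lift_decomp x u : resv x = u -> x = liftv u + twicev (hibitv (x - liftv u)).
Proof. by move<-; rewrite -resv_eq_twicev ?resv_liftv // addrC subrK. Qed.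

End Vectors.

Lemma bin_dot_rows n m p (A : 'M['F_2]_(m, n)) (B : 'M['F_2]_(p, n)) i j :
  bin_dot (row i A) (row j B) = (A *m B^T) i j.
Proof. by rewrite mxE; apply: eq_bigr=> k _; rewrite !mxE. Qed.

Section BinaryCodes.
Variable n : nat.
Notation V2 := 'rV['F_2]_n.
Implicit Types (u v w : V2) (C : {set V2}).

Definition bin_dual C : {set V2} := [set w | [forall u in C, bin_dot w u == 0]].

Lemma bin_dotC u w : bin_dot u w = bin_dot w u.
Proof. by apply: eq_bigr=> i _; rewrite mulrC. Qed.
Lemma bin_dotDr u v w : bin_dot u (v + w) = bin_dot u v + bin_dot u w.
Proof. by rewrite /bin_dot -big_split; apply: eq_bigr=> i _; rewrite mxE mulrDr. Qed.
Lemma bin_dot_mx u w : bin_dot u w = (u *m w^T) 0 0.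
Proof. by rewrite -bin_dot_rows !row_id. Qed.

Lemma bin_dualP C w : reflect (forall u, u \in C -> bin_dot w u = 0) (w \in bin_dual C).
Proof. by rewrite inE; apply: (iffP forall_inP) => wC u /wC /eqP. Qed.

Section LinearCode.
Variable C : {set V2}.
Hypothesis linC : bin_linear_code C.

Lemma bin_code0 : 0 \in C.
Proof. by case/and3P: linC. Qed.
Lemma bin_codeD u v : u \in C -> v \in C -> u + v \in C.
Proof. by case/and3P: linC => _ /forall_inP CD _ uC vC; have /forall_inP := CD u uC; apply. Qed.
Lemma bin_codeZ a v : v \in C -> a *: v \in C.
Proof. by case/and3P: linC => _ _ /forallP/(_ a)/forall_inP; apply. Qed.
Lemma bin_code_sum I (r : seq I) (P : pred I) (F : I -> V2) :
  (forall i, P i -> F i \in C) -> \sum_(i <- r | P i) F i \in C.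
Proof. by move=> FC; elim/big_ind: _ => //; [apply: bin_code0 | apply: bin_codeD]. Qed.

Definition code_mx : 'M['F_2]_(#|C|, n) := \matrix_(i < #|C|) (enum_val i : V2).
Definition code_basis := row_base code_mx.
Definition code_dim := \rank code_mx.
Notation G := code_basis.

Lemma bin_code_memE v : (v \in C) = (v <= G)%MS.
Proof.
rewrite /G eq_row_base; apply/idP/idP=> [vC|/submxP[u ->]].
  have <- : row (enum_rank_in vC v) code_mx = v by rewrite rowK enum_rankK_in.
  exact: row_sub.
rewrite mulmx_sum_row; apply: bin_code_sum => i _; apply: bin_codeZ.
by rewrite rowK; apply: enum_valP.
Qed.

Lemma code_basis_free : row_free G.
Proof. exact: row_base_free. Qed.

Lemma code_basis_mem i : row i G \in C.
Proof. by rewrite bin_code_memE row_sub. Qed.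

Lemma bin_code_comb v : v \in C ->
  exists c : 'rV['F_2]_code_dim, v = \sum_j c 0 j *: row j G.
Proof. by rewrite bin_code_memE => /submxP[c ->]; exists c; rewrite mulmx_sum_row. Qed.

Lemma card_bin_code : #|C| = (2 ^ code_dim)%N.
Proof.
have -> : C = [set c *m G | c in [set: 'rV['F_2]_code_dim]].
  apply/setP=> v; rewrite bin_code_memE.
  apply/idP/imsetP=> [/submxP[c ->]|[c _ ->]]; [by exists c | exact: submxMl].
rewrite card_in_imset; last by move=> c1 c2 _ _; apply: (row_free_inj code_basis_free).
by rewrite cardsT card_mx card_Fp // mul1n.
Qed.

Lemma bin_dual_mxE w : (w \in bin_dual C) = (w *m G^T == 0).
Proof.
apply/bin_dualP/eqP=> [wC|wG u].
  apply/matrixP=> i j; rewrite [i]ord1 [RHS]mxE -bin_dot_rows row_id.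
  exact/wC/code_basis_mem.
rewrite bin_code_memE => /submxP[c ->].
by rewrite bin_dot_mx trmx_mul mulmxA wG mul0mx mxE.
Qed.

Lemma bin_dual_rows w : (forall i, bin_dot w (row i G) = 0) -> w \in bin_dual C.
Proof.
move=> wG; rewrite bin_dual_mxE; apply/eqP/matrixP=> i j.
by rewrite [i]ord1 [RHS]mxE -(wG j) -bin_dot_rows row_id.
Qed.

Lemma bin_dualK : bin_dual (bin_dual C) = C.
Proof.
apply/setP=> v; apply/bin_dualP/idP=> [vCC|vC w /bin_dualP wC]; last first.
  by rewrite bin_dotC wC.
pose K := kermx G^T.
have sGK : (G <= kermx K^T)%MS.
  by rewrite sub_kermx -[G]trmxK -trmx_mul mulmx_ker trmx0.
have sKG : (kermx K^T <= G)%MS.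
  rewrite -(mxrank_leqif_sup sGK).2; apply/eqP.
  by rewrite !(mxrank_ker, mxrank_tr) subKn // rank_leq_col.
rewrite bin_code_memE; apply: submx_trans sKG; rewrite sub_kermx; apply/eqP.
apply/matrixP=> i j; rewrite [i]ord1 [RHS]mxE -bin_dot_rows row_id.
rewrite vCC // bin_dual_mxE.
by apply/eqP/sub_kermxP/(submx_trans (row_sub _ _)).
Qed.

Lemma self_orthogonal_dim : {subset C <= bin_dual C} -> (code_dim.*2 <= n)%N.
Proof.
move=> CC; have : (G <= kermx G^T)%MS.
  rewrite sub_kermx; apply/eqP/row_matrixP=> i.
  by rewrite row_mul row0; apply/eqP; rewrite -bin_dual_mxE CC ?code_basis_mem.
move/mxrankS; rewrite mxrank_ker mxrank_tr /G eq_row_base => dimC.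
by rewrite -addnn -leq_subRL // (leq_trans dimC) // leq_subr.
Qed.

End LinearCode.
End BinaryCodes.

Section Z4Codes.
Variable n : nat.
Notation V4 := 'rV['Z_4]_n.
Notation V2 := 'rV['F_2]_n.
Implicit Types (x y : V4) (u v w : V2) (D : {set V4}).

Definition dualZ4 D : {set V4} := [set x | [forall y in D, dotZ4 x y == 0]].
Definition residue D : {set V2} := [set resv x | x in D].

Lemma dualZ4P D x : reflect (forall y, y \in D -> dotZ4 x y = 0) (x \in dualZ4 D).
Proof. by rewrite inE; apply: (iffP forall_inP) => xD y /xD /eqP. Qed.

Lemma dualZ4_0 D : 0 \in dualZ4 D.
Proof. by apply/dualZ4P=> y _; rewrite dotZ40l. Qed.
Lemma dualZ4D D x y : x \in dualZ4 D -> y \in dualZ4 D -> x + y \in dualZ4 D.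
Proof.
move=> /dualZ4P xD /dualZ4P yD; apply/dualZ4P=> z zD.
by rewrite dotZ4Dl xD // yD // addr0.
Qed.
Lemma dualZ4Z D a x : x \in dualZ4 D -> a *: x \in dualZ4 D.
Proof. by move=> /dualZ4P xD; apply/dualZ4P=> z zD; rewrite dotZ4Zl xD // mulr0. Qed.
Lemma dualZ4N D x : x \in dualZ4 D -> - x \in dualZ4 D.
Proof. by move=> /dualZ4P xD; apply/dualZ4P=> z zD; rewrite dotZ4Nl xD // oppr0. Qed.
Lemma dualZ4S D D' : D \subset D' -> dualZ4 D' \subset dualZ4 D.
Proof.
move/subsetP=> DD'; apply/subsetP=> x /dualZ4P xD'.
by apply/dualZ4P=> y /DD'; apply: xD'.
Qed.

Section SelfDual.
Variable D : {set V4}.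
Hypothesis sdD : D = dualZ4 D.

Lemma self_dual0 : 0 \in D. Proof. by rewrite sdD dualZ4_0. Qed.
Lemma self_dualD x y : x \in D -> y \in D -> x + y \in D.
Proof. by rewrite sdD; apply: dualZ4D. Qed.
Lemma self_dualZ a x : x \in D -> a *: x \in D.
Proof. by rewrite sdD; apply: dualZ4Z. Qed.
Lemma self_dualB x y : x \in D -> y \in D -> x - y \in D.
Proof. by move=> xD yD; rewrite self_dualD // sdD dualZ4N -?sdD. Qed.
Lemma self_dual_sum I (r : seq I) (P : pred I) (F : I -> V4) :
  (forall i, P i -> F i \in D) -> \sum_(i <- r | P i) F i \in D.
Proof. by move=> FD; elim/big_ind: _ => //; [apply: self_dual0 | apply: self_dualD]. Qed.
Lemma self_dual_orth x y : x \in D -> y \in D -> dotZ4 x y = 0.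
Proof. by rewrite {1}sdD => /dualZ4P; apply. Qed.

Lemma self_dual_twicev w : (twicev w \in D) = (w \in bin_dual (residue D)).
Proof.
apply/idP/bin_dualP=> [wD _ /imsetP[x xD ->]|wD].
  by apply: twice_inj; rewrite -dotZ4_twicev self_dual_orth.
rewrite sdD; apply/dualZ4P=> x xD.
by rewrite dotZ4_twicev wD ?imset_f.
Qed.

Lemma residue_linear : bin_linear_code (residue D).
Proof.
apply/and3P; split.
- by rewrite -resv0 imset_f // self_dual0.
- apply/forall_inP=> _ /imsetP[x xD ->]; apply/forall_inP=> _ /imsetP[y yD ->].
  by rewrite -resvD imset_f // self_dualD.
- apply/forallP=> a; apply/forall_inP=> _ /imsetP[x xD ->].
  by rewrite -resvZ imset_f // self_dualZ.
Qed.

(* [x . x] is the weight of [resv x] modulo 4. *)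
Lemma residue_doubly_even : doubly_even (residue D).
Proof.
apply/forall_inP=> _ /imsetP[x xD ->].
by rewrite -natZ4_eq0 -dotZ4_self self_dual_orth.
Qed.

End SelfDual.

(* Lift u, w to Z_4: [|u + w| = |u| + |w| + 2 (u . w)] is read off [(u' + w') . (u' + w')]. *)
Lemma doubly_even_self_orthogonal (C : {set V2}) : bin_linear_code C -> doubly_even C ->
  {subset C <= bin_dual C}.
Proof.
move=> linC /forall_inP evenC u uC; apply/bin_dualP=> w wC.
have lift_isotropic v : v \in C -> dotZ4 (liftv v) (liftv v) = 0.
  by move=> vC; apply/eqP; rewrite dotZ4_self resv_liftv natZ4_eq0 evenC.
have := dotZ4_self (liftv u + liftv w).
rewrite resvD !resv_liftv (eqP (_ : _%:R == 0)); last first.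
  by rewrite natZ4_eq0 evenC // bin_codeD.
rewrite !dotZ4Dl !dotZ4Dr !lift_isotropic // add0r addr0 (dotZ4C (liftv w)).
by move/addZ4_eq0; rewrite res2_dotZ4 !resv_liftv.
Qed.

End Z4Codes.

Section Splittings.
Variable r : nat.
Notation P := ('I_r * 'I_r)%type.

Definition upper_pairs : {set P} := [set p : P | (p.1 <= p.2)%N].

Lemma card_upper_pairs : #|upper_pairs| = ((r * r.+1)./2)%N.
Proof.
pose lower_pairs : {set P} := [set p : P | (p.2 <= p.1)%N].
have card_lower : #|lower_pairs| = #|upper_pairs|.
  have -> : lower_pairs = [set (p.2, p.1) | p in upper_pairs].
    apply/setP=> -[i j]; rewrite inE.
    apply/idP/imsetP=> [ji|[[a b] + [-> ->]]]; last by rewrite inE.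
    by exists (j, i); rewrite ?inE.
  by apply: card_imset=> -[a b] [c d] [-> ->].
have cover : upper_pairs :|: lower_pairs = setT.
  by apply/setP=> -[i j]; rewrite !inE leq_total.
have card_diag : #|upper_pairs :&: lower_pairs| = r.
  have -> : upper_pairs :&: lower_pairs = [set (i, i) | i : 'I_r].
    apply/setP=> -[i j]; rewrite !inE /= -eqn_leq.
    by apply/eqP/imsetP=> [/val_inj ->|[k _ [-> ->]]] //; exists j.
  by rewrite card_imset ?card_ord // => a b [].
have := cardsUI upper_pairs lower_pairs.
rewrite cover card_diag card_lower cardsT card_prod card_ord addnn => sq.
by rewrite mulnSr sq half_double.
Qed.

(* Decompositions of c as [f + f^T] off the diagonal; the diagonal of f is free. *)
Definition splittings (c : P -> 'F_2) : {set {ffun P -> 'F_2}} :=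
  [set f : {ffun P -> 'F_2} |
    [forall p : P, (p.1 != p.2) ==> (f p + f (p.2, p.1) == c p)]].

Variable c : P -> 'F_2.
Hypothesis c_sym : forall i j, c (i, j) = c (j, i).

Lemma splittingsE f p : f \in splittings c -> p.1 != p.2 -> f p = c p + f (p.2, p.1).
Proof.
rewrite inE => /forallP/(_ p) /implyP fp /fp /eqP <-.
by rewrite -addrA addF2 addr0.
Qed.

(* A splitting is determined by, and arbitrary on, the upper triangle. *)
Lemma card_splittings : #|splittings c| = (2 ^ ((r * r.+1)./2))%N.
Proof.
pose restr (f : {ffun P -> 'F_2}) : {ffun P -> 'F_2} :=
  [ffun p => if p \in upper_pairs then f p else 0].
have restr_inj : {in splittings c &, injective restr}.
  move=> f f' fS f'S ff'; apply/ffunP=> -[i j].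
  have upper_eq q : q \in upper_pairs -> f q = f' q.
    by move=> qU; have := congr1 (fun g : {ffun P -> 'F_2} => g q) ff'; rewrite !ffunE qU.
  have [ij|ji] := leqP i j; first by apply: upper_eq; rewrite inE.
  have nij : (i, j).1 != (i, j).2 by rewrite /= neq_ltn ji orbT.
  by rewrite !(splittingsE _ nij) // upper_eq // inE ltnW.
rewrite -(card_in_imset restr_inj).
transitivity (#|[set: 'F_2]| ^ #|upper_pairs|)%N; last first.
  by rewrite cardsT card_Fp // card_upper_pairs.
rewrite -(card_pffun_on 0); apply: eq_card=> h; apply/imsetP/idP.
  case=> f fS ->; apply/pffun_onP; split=> [|y _]; last by rewrite inE.
  by apply/supportP=> p pU; rewrite ffunE (negbTE pU).
case/pffun_onP=> /supportP h_upper _.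
exists [ffun p => if p \in upper_pairs then h p else c p + h (p.2, p.1)].
  rewrite inE; apply/forallP=> -[i j] /=; apply/implyP=> ij; rewrite !ffunE !inE /=.
  have [le|lt] := leqP i j; last by rewrite (ltnW lt) -addrA addF2 addr0.
  have : ~~ (j <= i)%N by rewrite -ltnNge ltn_neqAle ij le.
  by move/negbTE => ->; rewrite c_sym addrCA addF2 addr0.
by apply/ffunP=> p; rewrite !ffunE; by case: (boolP (p \in upper_pairs)) => // pU; rewrite h_upper.
Qed.

End Splittings.

Section ResidueFibre.
Variable n : nat.
Notation V4 := 'rV['Z_4]_n.
Notation V2 := 'rV['F_2]_n.
Implicit Types (x y s : V4) (u v w : V2) (D : {set V4}).
Variable C : {set V2}.
Hypotheses (linC : bin_linear_code C) (evenC : doubly_even C).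

Notation r := (code_dim C).
Notation g j := (row j (code_basis C)).

Definition self_dual_over : {set {set V4}} :=
  [set D | (D == dualZ4 D) && (residue D == C)].

Lemma self_dual_overP D : D \in self_dual_over -> D = dualZ4 D /\ residue D = C.
Proof. by rewrite inE => /andP[/eqP sdD /eqP resD]. Qed.

Lemma lifts_comb (xs : 'I_r -> V4) x : (forall j, resv (xs j) = g j) ->
  resv x \in C -> exists c : 'rV['F_2]_r, resv (\sum_j lift01 (c 0 j) *: xs j) = resv x.
Proof.
move=> resv_xs /(bin_code_comb linC)[c xc]; exists c.
by rewrite resv_sum xc; apply: eq_bigr=> j _; rewrite resvZ resv_xs.
Qed.

Lemma basis_orthogonal i j : bin_dot (g i) (g j) = 0.
Proof.
have /bin_dualP := doubly_even_self_orthogonal linC evenC (code_basis_mem linC i).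
by apply; apply: code_basis_mem.
Qed.

(* [lift_defect (i, j)] is half of [- (liftv g_i . liftv g_j)], which is even. *)
Definition lift_defect (p : 'I_r * 'I_r) : 'F_2 :=
  hibit (- dotZ4 (liftv (g p.1)) (liftv (g p.2))).

Lemma twice_lift_defect i j :
  twice (lift_defect (i, j)) = - dotZ4 (liftv (g i)) (liftv (g j)).
Proof. by rewrite -res2_eq0 // res2N res2_dotZ4 !resv_liftv basis_orthogonal. Qed.

Lemma lift_defect_sym i j : lift_defect (i, j) = lift_defect (j, i).
Proof. by rewrite /lift_defect dotZ4C. Qed.

Definition pick_lift D j : V4 := odflt 0 [pick x in D | resv x == g j].

Lemma pick_liftP D j : D \in self_dual_over ->
  pick_lift D j \in D /\ resv (pick_lift D j) = g j.
Proof.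
case/self_dual_overP=> _ resD; rewrite /pick_lift.
case: pickP => [x /andP[xD /eqP <-] //|noLift].
have : g j \in residue D by rewrite resD code_basis_mem.
by case/imsetP=> x xD xg; have := noLift x; rewrite xD xg eqxx.
Qed.

(* Writing the chosen lift of g_j as [liftv g_j + twicev b_j], record [g_i . b_j]. *)
Definition lift_form D : {ffun 'I_r * 'I_r -> 'F_2} :=
  [ffun p => bin_dot (g p.1) (hibitv (pick_lift D p.2 - liftv (g p.2)))].

Lemma hibitv_sub_dual D y y' : D \in self_dual_over -> y \in D -> y' \in D ->
  resv y = resv y' -> hibitv (y - y') \in bin_dual C.
Proof.
case/self_dual_overP=> sdD resD yD y'D yy'.
by rewrite -resD -self_dual_twicev // -resv_eq_twicev // self_dualB.
Qed.

(* Two lifts of g_j differ by an element of [twicev (bin_dual C)], invisible to [g_i]. *)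
Lemma lift_formE D j y : D \in self_dual_over -> y \in D -> resv y = g j ->
  forall i, lift_form D (i, j) = bin_dot (g i) (hibitv (y - liftv (g j))).
Proof.
move=> DS yD yg i; rewrite ffunE /=.
have [pD pg] := pick_liftP j DS; set p := pick_lift D j in pD pg *.
have yp_dual := hibitv_sub_dual DS yD pD (etrans yg (esym pg)).
have -> : y - liftv (g j) = twicev (hibitv (p - liftv (g j)) + hibitv (y - p)).
  rewrite twicevD -!resv_eq_twicev ?resv_liftv ?yg ?pg //.
  by rewrite [RHS]addrC addrA subrK.
rewrite hibitv_twicev bin_dotDr [bin_dot (g i) (hibitv (y - p))]bin_dotC.
by rewrite (bin_dualP _ _ yp_dual _ (code_basis_mem linC i)) addr0.
Qed.

Lemma lift_form_splitting D : D \in self_dual_over -> lift_form D \in splittings lift_defect.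
Proof.
move=> DS; rewrite inE; apply/forallP=> -[i j] /=; apply/implyP=> _.
have [xiD xig] := pick_liftP i DS; have [xjD xjg] := pick_liftP j DS.
have := self_dual_orth (self_dual_overP DS).1 xiD xjD.
rewrite (lift_decomp xig) (lift_decomp xjg) dotZ4_lift_twice => /eqP.
rewrite addrC addr_eq0 -twice_lift_defect => /eqP/twice_inj <-.
by rewrite !ffunE /= [bin_dot (g j) _]bin_dotC.
Qed.

Lemma lift_form_sub D D' : D \in self_dual_over -> D' \in self_dual_over ->
  lift_form D = lift_form D' -> D' \subset D.
Proof.
move=> DS D'S DD'; have [sdD resD] := self_dual_overP DS.
have [sdD' resD'] := self_dual_overP D'S.
have torsion_eq w : (twicev w \in D') = (twicev w \in D).
  by rewrite !self_dual_twicev // resD resD'.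
have pick_mem j : pick_lift D' j \in D.
  have [pD pg] := pick_liftP j DS; have [p'D' p'g] := pick_liftP j D'S.
  set b := hibitv (pick_lift D j - liftv (g j)).
  set b' := hibitv (pick_lift D' j - liftv (g j)).
  have bb' : b' + b \in bin_dual C.
    apply: bin_dual_rows => // i; rewrite bin_dotC bin_dotDr.
    have := congr1 (fun f : {ffun _ -> _} => f (i, j)) DD'.
    by rewrite !ffunE /= -/b -/b' => ->; apply: addF2.
  rewrite (lift_decomp p'g) -/b' (_ : b' = b + (b' + b)); last first.
    by rewrite addrCA addv_F2 addr0.
  rewrite twicevD addrA /b -(lift_decomp pg).
  by rewrite self_dualD // self_dual_twicev // resD.
apply/subsetP=> y yD'.
have [|c sy] := @lifts_comb (pick_lift D') y (fun j => (pick_liftP j D'S).2).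
  by rewrite -resD' imset_f.
set s := \sum_j _ in sy.
have sD : s \in D by apply: self_dual_sum => // j _; apply: self_dualZ.
have s'D' : s \in D'.
  by apply: self_dual_sum => // j _; apply/self_dualZ/(pick_liftP j D'S).1.
rewrite -(subrK s y) self_dualD // resv_eq_twicev // -torsion_eq.
by rewrite -resv_eq_twicev // self_dualB.
Qed.

Lemma lift_form_inj : {in self_dual_over &, injective lift_form}.
Proof.
move=> D D' DS D'S DD'; apply/eqP; rewrite eqEsubset lift_form_sub //=.
rewrite (self_dual_overP DS).1 (self_dual_overP D'S).1.
exact/dualZ4S/lift_form_sub.
Qed.

Section LiftedBasis.
Variable xs : 'I_r -> V4.
Hypothesis resv_xs : forall j, resv (xs j) = g j.
Hypothesis xs_orth : forall j k, dotZ4 (xs j) (xs k) = 0.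

Definition lifts_code : {set V4} :=
  [set x | (resv x \in C) && [forall j, dotZ4 x (xs j) == 0]].

Lemma lifts_codeP x :
  reflect (resv x \in C /\ forall j, dotZ4 x (xs j) = 0) (x \in lifts_code).
Proof.
rewrite inE; apply: (iffP andP) => -[xC xo]; split=> //.
  by move=> j; apply/eqP/(forallP xo).
by apply/forallP=> j; rewrite xo.
Qed.

Lemma lifts_code_mem j : xs j \in lifts_code.
Proof. by apply/lifts_codeP; rewrite resv_xs code_basis_mem. Qed.

Lemma twicev_lifts_code w : w \in bin_dual C -> twicev w \in lifts_code.
Proof.
move=> wC; apply/lifts_codeP; rewrite resv_twicev bin_code0 //; split=> // k.
by rewrite dotZ4_twicev resv_xs (bin_dualP _ _ wC) ?code_basis_mem.
Qed.

(* If s is the combination of the xs with the residue of x, then x - s is in [twicev (bin_dual C)]. *)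
Lemma lifts_code_orth : lifts_code \subset dualZ4 lifts_code.
Proof.
apply/subsetP=> x /lifts_codeP[xC xo]; apply/dualZ4P=> y /lifts_codeP[yC yo].
have [c sx] := lifts_comb resv_xs xC; set s := \sum_j _ in sx.
have s_orth z : (forall j, dotZ4 (xs j) z = 0) -> dotZ4 s z = 0.
  by move=> zo; rewrite dotZ4_suml big1 // => j _; rewrite dotZ4Zl zo mulr0.
have xs_dual : hibitv (x - s) \in bin_dual C.
  apply: bin_dual_rows => // i; apply/eqP; rewrite -twice_eq0 -(resv_xs i).
  by rewrite -dotZ4_twicev -resv_eq_twicev // dotZ4Dl dotZ4Nl xo s_orth ?subrr.
rewrite -(subrK s x) dotZ4Dl s_orth => [|j]; last by rewrite dotZ4C yo.
by rewrite resv_eq_twicev // dotZ4_twicev (bin_dualP _ _ xs_dual) // addr0.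
Qed.

Lemma dualZ4_lifts_code : dualZ4 lifts_code \subset lifts_code.
Proof.
apply/subsetP=> y /dualZ4P yo; apply/lifts_codeP; split=> [|j]; last first.
  exact/yo/lifts_code_mem.
rewrite -(bin_dualK linC); apply/bin_dualP=> w wC.
apply: twice_inj; rewrite bin_dotC -dotZ4_twicev dotZ4C yo //.
exact: twicev_lifts_code.
Qed.

Lemma lifts_code_over : lifts_code \in self_dual_over.
Proof.
have sd : lifts_code = dualZ4 lifts_code.
  by apply/eqP; rewrite eqEsubset lifts_code_orth dualZ4_lifts_code.
rewrite inE -sd eqxx /=; apply/eqP/setP=> v.
apply/imsetP/idP=> [[x /lifts_codeP[xC _] ->] // | vC].
have [c sv] : exists c : 'rV_r, resv (\sum_j lift01 (c 0 j) *: xs j) = resv (liftv v).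
  by apply: lifts_comb; rewrite ?resv_liftv.
exists (\sum_j lift01 (c 0 j) *: xs j); last by rewrite sv resv_liftv.
by apply: self_dual_sum => // j _; apply/self_dualZ/lifts_code_mem.
Qed.

End LiftedBasis.

(* Realise f by lifts [liftv g_j + twicev b_j] with [g_i . b_j = f (i, j)]. *)
Lemma lift_form_surj f : f \in splittings lift_defect ->
  exists2 D, D \in self_dual_over & lift_form D = f.
Proof.
move=> fS; have [G' GG'] := row_freeP (code_basis_free C).
pose B := (G' *m \matrix_(i, j) f (i, j))^T.
have gB i j : bin_dot (g i) (row j B) = f (i, j).
  by rewrite bin_dot_rows trmxK mulmxA GG' mul1mx mxE.
pose xs j := liftv (g j) + twicev (row j B).
have resv_xs j : resv (xs j) = g j by rewrite resvD resv_liftv resv_twicev addr0.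
have xs_orth j k : dotZ4 (xs j) (xs k) = 0.
  have [<-|jk] := eqVneq j k.
    apply/eqP; rewrite dotZ4_self resv_xs natZ4_eq0.
    by move/forall_inP: evenC; apply; apply: code_basis_mem.
  rewrite dotZ4_lift_twice gB bin_dotC gB.
  move: fS; rewrite inE => /forallP/(_ (j, k)); rewrite jk /= => /eqP ->.
  by rewrite twice_lift_defect addrN.
exists (lifts_code xs); first exact: lifts_code_over.
apply/ffunP=> -[i j].
rewrite (lift_formE (lifts_code_over resv_xs xs_orth) (lifts_code_mem resv_xs xs_orth j)) //.
by rewrite /xs [liftv _ + _]addrC addrK hibitv_twicev gB.
Qed.

Lemma card_self_dual_over : #|self_dual_over| = (2 ^ ((r * r.+1)./2))%N.
Proof.
rewrite -(card_splittings lift_defect_sym) -(card_in_imset lift_form_inj).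
apply: eq_card=> f; apply/imsetP/idP=> [[D DS ->]|]; first exact: lift_form_splitting.
by case/lift_form_surj=> D DS <-; exists D.
Qed.

End ResidueFibre.

Section CountZ4.
Local Close Scope ring_scope.
Variable n : nat.
Implicit Type C : {set 'rV['F_2]_n}.

Definition self_dual_Z4 : {set {set 'rV['Z_4]_n}} := [set D | D == dualZ4 D].

Definition nu_code C k : bool :=
  [&& bin_linear_code C, #|C| == 2 ^ k, bin_self_orthogonal C & doubly_even C].

Lemma nu_code_dim C k : bin_linear_code C -> doubly_even C -> nu_code C k = (code_dim C == k).
Proof.
move=> linC evenC; rewrite /nu_code linC evenC card_bin_code // eqn_exp2l // andbT /=.
case: (code_dim C == k) => //=; apply/forall_inP=> u uC; apply/forall_inP=> w wC.
by have /bin_dualP -> := doubly_even_self_orthogonal linC evenC uC.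
Qed.

Lemma card_self_dual_over_dim C : bin_linear_code C -> doubly_even C ->
  #|self_dual_over C| =
  \sum_(k < n./2.+1) (if nu_code C k then 2 ^ (k * k.+1)./2 else 0).
Proof.
move=> linC evenC; rewrite card_self_dual_over //.
have dimC : code_dim C < n./2.+1.
  rewrite ltnS -(half_double (code_dim C)); apply/half_leq/self_orthogonal_dim => //.
  exact: doubly_even_self_orthogonal.
rewrite (bigD1 (Ordinal dimC)) //= nu_code_dim // eqxx big1 ?addn0 // => k.
by rewrite nu_code_dim // -val_eqE eq_sym => /negbTE ->.
Qed.

Lemma self_dual_over_eq0 C : ~~ (bin_linear_code C && doubly_even C) ->
  self_dual_over C = set0.
Proof.
move=> badC; apply/setP=> D; rewrite !inE; apply/negbTE; apply: contra badC.
by case/andP=> /eqP sdD /eqP <-; rewrite residue_linear // residue_doubly_even.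
Qed.

Lemma card_self_dual_Z4 :
  #|self_dual_Z4| = \sum_(k < n./2.+1) nu n k * 2 ^ (k * k.+1)./2.
Proof.
have -> : #|self_dual_Z4| = \sum_(C : {set 'rV['F_2]_n}) #|self_dual_over C|.
  rewrite -sum1_card (partition_big (@residue n) predT) //=.
  by apply: eq_bigr => C _; rewrite -sum1_card; apply: eq_bigl => D; rewrite !inE.
symmetry; under eq_bigr => k _ do rewrite /nu -sum1_card big_distrl big_mkcond /=.
rewrite exchange_big; apply: eq_bigr => C _.
have [/andP[linC evenC]|badC] := boolP (bin_linear_code C && doubly_even C).
  by rewrite card_self_dual_over_dim //; apply: eq_bigr => k _; rewrite inE mul1n.
rewrite self_dual_over_eq0 // cards0 big1 // => k _; rewrite inE /nu_code.
by case: and4P => // -[linC _ _ evenC]; rewrite linC evenC in badC.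
Qed.

End CountZ4.

(* R is Z_4 x Z_4 via the evaluations v = 0 and v = 1: a + b v |-> (a, a + b). *)
Definition eval1 (p : Rt) : 'Z_4 := p.1 + p.2.

Lemma eval1D p q : eval1 (Radd p q) = eval1 p + eval1 q.
Proof. by rewrite /eval1 /= addrACA. Qed.
Lemma eval1M p q : eval1 (Rmul p q) = eval1 p * eval1 q.
Proof. by rewrite /eval1 /= mulrDl !mulrDr !addrA. Qed.

Section RCodes.
Variable n : nat.
Notation V4 := 'rV['Z_4]_n.
Implicit Types (x y c : Rvec n) (a b : V4) (C : {set Rvec n}) (D : {set V4}).

Definition evalv0 x : V4 := \row_i (x i).1.
Definition evalv1 x : V4 := \row_i eval1 (x i).
Definition Rvec_of a b : Rvec n := [ffun i => (a 0 i, b 0 i - a 0 i)].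
Definition code_prod D1 D2 : {set Rvec n} :=
  [set x | (evalv0 x \in D1) && (evalv1 x \in D2)].

Lemma evalv0_of a b : evalv0 (Rvec_of a b) = a.
Proof. by apply/rowP=> i; rewrite !mxE ffunE. Qed.
Lemma evalv1_of a b : evalv1 (Rvec_of a b) = b.
Proof. by apply/rowP=> i; rewrite !mxE ffunE /eval1 /= addrC subrK. Qed.
Lemma Rvec_of_eval x : Rvec_of (evalv0 x) (evalv1 x) = x.
Proof.
apply/ffunP=> i; rewrite ffunE !mxE /eval1 (addrC (x i).1) addrK.
by case: (x i).
Qed.
Lemma evalv_inj x y : evalv0 x = evalv0 y -> evalv1 x = evalv1 y -> x = y.
Proof. by move=> e0 e1; rewrite -(Rvec_of_eval x) -(Rvec_of_eval y) e0 e1. Qed.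

Lemma evalv0D x y : evalv0 (vadd x y) = evalv0 x + evalv0 y.
Proof. by apply/rowP=> i; rewrite !mxE ffunE. Qed.
Lemma evalv1D x y : evalv1 (vadd x y) = evalv1 x + evalv1 y.
Proof. by apply/rowP=> i; rewrite !mxE ffunE eval1D. Qed.
Lemma evalv0Z p x : evalv0 (vscale p x) = p.1 *: evalv0 x.
Proof. by apply/rowP=> i; rewrite !mxE ffunE. Qed.
Lemma evalv1Z p x : evalv1 (vscale p x) = eval1 p *: evalv1 x.
Proof. by apply/rowP=> i; rewrite !mxE ffunE eval1M. Qed.
Lemma evalv0_0 : evalv0 (vzero n) = 0.
Proof. by apply/rowP=> i; rewrite !mxE ffunE. Qed.
Lemma evalv1_0 : evalv1 (vzero n) = 0.
Proof. by apply/rowP=> i; rewrite !mxE ffunE /eval1 /= addr0. Qed.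

Lemma dotR_eq0 x y : (dotR x y == Rzero) =
  (dotZ4 (evalv0 x) (evalv0 y) == 0) && (dotZ4 (evalv1 x) (evalv1 y) == 0).
Proof.
have -> : dotZ4 (evalv0 x) (evalv0 y) = (dotR x y).1.
  rewrite (big_morph (fun p : Rt => p.1) (id1 := 0) (op1 := +%R)) //.
  by apply: eq_bigr=> i _; rewrite !mxE.
have -> : dotZ4 (evalv1 x) (evalv1 y) = eval1 (dotR x y).
  rewrite (big_morph eval1 eval1D (id1 := 0)); last by rewrite /eval1 /= addr0.
  by apply: eq_bigr=> i _; rewrite !mxE eval1M.
rewrite /eval1; case: (dotR x y) => p q /=.
by rewrite /Rzero xpair_eqE; case: (p =P 0) => [->|] //=; rewrite add0r.
Qed.

Lemma R_dualP C x : reflect (forall c, c \in C ->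
   dotZ4 (evalv0 x) (evalv0 c) = 0 /\ dotZ4 (evalv1 x) (evalv1 c) = 0) (x \in R_dual C).
Proof.
rewrite inE; apply: (iffP forall_inP) => xC c /xC; rewrite ?dotR_eq0.
  by case/andP=> /eqP -> /eqP ->.
by case=> -> ->; rewrite eqxx.
Qed.

Lemma R_dual0 C : vzero n \in R_dual C.
Proof. by apply/R_dualP=> c _; rewrite evalv0_0 evalv1_0 !dotZ40l. Qed.
Lemma R_dualD C x y : x \in R_dual C -> y \in R_dual C -> vadd x y \in R_dual C.
Proof.
move=> /R_dualP xC /R_dualP yC; apply/R_dualP=> c cC.
have [x0 x1] := xC c cC; have [y0 y1] := yC c cC.
by rewrite evalv0D evalv1D !dotZ4Dl x0 x1 y0 y1 addr0.
Qed.
Lemma R_dualZ C p x : x \in R_dual C -> vscale p x \in R_dual C.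
Proof.
move=> /R_dualP xC; apply/R_dualP=> c cC; have [x0 x1] := xC c cC.
by rewrite evalv0Z evalv1Z !dotZ4Zl x0 x1 !mulr0.
Qed.

Lemma R_self_dual_linear C : C = R_dual C -> R_linear_code C.
Proof.
move=> sdC; apply/and3P; split; first by rewrite sdC R_dual0.
  by apply/forall_inP=> x xC; apply/forall_inP=> y yC; rewrite sdC R_dualD -?sdC.
by apply/forallP=> p; apply/forall_inP=> x xC; rewrite sdC R_dualZ -?sdC.
Qed.

Lemma R_dual_prod D1 D2 : 0 \in D1 -> 0 \in D2 ->
  R_dual (code_prod D1 D2) = code_prod (dualZ4 D1) (dualZ4 D2).
Proof.
move=> D1_0 D2_0; apply/setP=> x; apply/R_dualP/idP=> [xD|].
  rewrite inE; apply/andP; split; apply/dualZ4P=> y yD.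
    have : Rvec_of y 0 \in code_prod D1 D2 by rewrite inE evalv0_of evalv1_of yD D2_0.
    by case/xD; rewrite evalv0_of.
  have : Rvec_of 0 y \in code_prod D1 D2 by rewrite inE evalv0_of evalv1_of yD D1_0.
  by case/xD; rewrite evalv1_of.
rewrite inE => /andP[/dualZ4P x0 /dualZ4P x1] c; rewrite inE => /andP[c0 c1].
by rewrite x0 // x1.
Qed.

Lemma code_prod_inj (D1 D2 E1 E2 : {set V4}) : 0 \in D1 -> 0 \in D2 -> 0 \in E1 -> 0 \in E2 ->
  code_prod D1 D2 = code_prod E1 E2 -> D1 = E1 /\ D2 = E2.
Proof.
move=> D1_0 D2_0 E1_0 E2_0 /setP DE; split; apply/setP=> a.
  by have := DE (Rvec_of a 0); rewrite !inE evalv0_of evalv1_of D2_0 E2_0 !andbT.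
by have := DE (Rvec_of 0 a); rewrite !inE evalv0_of evalv1_of D1_0 E1_0.
Qed.

(* The idempotents 1 - v and v split a self-dual code into its two evaluations. *)
Lemma R_self_dual_prod C : C = R_dual C ->
  C = code_prod [set evalv0 x | x in C] [set evalv1 x | x in C].
Proof.
move=> sdC; apply/setP=> x; apply/idP/idP=> [xC|]; first by rewrite inE !imset_f.
rewrite inE => /andP[/imsetP[c0 c0C x0] /imsetP[c1 c1C x1]].
have -> : x = vadd (vscale (1, -1) c0) (vscale (0, 1) c1).
  apply: evalv_inj; first by rewrite evalv0D !evalv0Z /= scale1r scale0r addr0.
  by rewrite evalv1D !evalv1Z /eval1 /= subrr scale0r !add0r scale1r.
by rewrite sdC; apply: R_dualD; apply: R_dualZ; rewrite -sdC.
Qed.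

Lemma R_self_dual_codesE :
  [set C : {set Rvec n} | R_linear_code C && R_self_dual C] =
  [set code_prod DD.1 DD.2 | DD in setX (self_dual_Z4 n) (self_dual_Z4 n)].
Proof.
apply/setP=> C; rewrite inE; apply/andP/imsetP=> [[_ /eqP sdC]|].
  set D1 := [set evalv0 x | x in C]; set D2 := [set evalv1 x | x in C].
  have C_prod : C = code_prod D1 D2 := R_self_dual_prod sdC.
  have D1_0 : 0 \in D1 by rewrite -evalv0_0 imset_f // sdC R_dual0.
  have D2_0 : 0 \in D2 by rewrite -evalv1_0 imset_f // sdC R_dual0.
  have [|sd1 sd2] := code_prod_inj D1_0 D2_0 (dualZ4_0 D1) (dualZ4_0 D2).
    by rewrite -R_dual_prod // -C_prod.
  by exists (D1, D2); rewrite // !inE -sd1 -sd2 !eqxx.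
case=> -[D1 D2]; rewrite !inE /= => /andP[/eqP sd1 /eqP sd2] ->.
have D1_0 : 0 \in D1 by rewrite sd1 dualZ4_0.
have D2_0 : 0 \in D2 by rewrite sd2 dualZ4_0.
have sd : code_prod D1 D2 = R_dual (code_prod D1 D2) by rewrite R_dual_prod // -sd1 -sd2.
by split; [apply: R_self_dual_linear | apply/eqP].
Qed.

Lemma card_R_self_dual :
  #|[set C : {set Rvec n} | R_linear_code C && R_self_dual C]| = (#|self_dual_Z4 n| ^ 2)%N.
Proof.
rewrite R_self_dual_codesE card_in_imset ?cardsX ?mulnn // => -[D1 D2] [E1 E2].
rewrite !inE /= => /andP[/eqP sdD1 /eqP sdD2] /andP[/eqP sdE1 /eqP sdE2].
by case/(code_prod_inj (self_dual0 sdD1) (self_dual0 sdD2) (self_dual0 sdE1) (self_dual0 sdE2))=> -> ->.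
Qed.

End RCodes.

Local Close Scope ring_scope.

Theorem theorem6 (n : nat) :
  #|[set C : {set Rvec n} | R_linear_code C && R_self_dual C]| =
  (\sum_(k < n./2.+1) nu n k * 2 ^ (k * k.+1)./2) ^ 2.
Proof. by rewrite card_R_self_dual card_self_dual_Z4. Qed.
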